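(* Let $\Gamma$ be a $\mathbb{Z}^d$-periodic graph with generic dispersion polynomial $\Phi$ and let $\eta\in\mathbb{Z}^{d+1}$. Then $\eta$ exposes a vertical face of $\mathcal{N}(\Phi)$ if and only if the initial graph $\mathrm{in}_\eta\widehat{\Gamma}$ has a vertex $v$ carrying both loops, the one labeled $\lambda$ and the one labeled $-V(v)$. Moreover, such a vector $\eta$ is horizontal (its last coordinate is $0$).
   Context: A $\mathbb{Z}^d$-periodic graph $\Gamma$ is a simple undirected graph of bounded degree with a free $\mathbb{Z}^d$-action $(\alpha,v)\mapsto\alpha+v$ by automorphisms with finitely many vertex and edge orbits; $W$ is a set of vertex orbit representatives. With independent indeterminates $e$ (one per edge orbit) and $V(v)$ ($v\in W$), the generic Floquet matrix $H$ has $(v,u)$ entry $\delta_{v,u}V(v)-\sum_{\alpha: v\sim\alpha+u}e_{(v,\alpha+u)}z^\alpha$ and $\Phi=\det(\lambda I_W-H)$, viewed as a polynomial in $(z,\lambda)$ with coefficients in $\mathbb{C}[e,V]$; $\mathcal{N}(\Phi)\subset\mathbb{R}^{d+1}$ is the convex hull of its $(z,\lambda)$-exponent vectors. A vector $\eta$ exposes the face on which $x\mapsto\eta\cdot x$ is minimized; a face is vertical if it contains a segment parallel to $(0,\dots,0,1)$. The directed labeled multigraph $\widehat{\Gamma}$ has vertex set $W$, two loops at each $v$ labeled $\lambda$ and $-V(v)$, and for each $u,v\in W$, $\alpha\in\mathbb{Z}^d$ with $v\sim\alpha+u$ a directed edge $v\leftarrow u$ labeled $e_{(v,\alpha+u)}z^\alpha$.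 A cycle cover $\zeta$ is a set of edges such that each vertex is the tail of exactly one and the head of exactly one edge of $\zeta$; $\mathrm{wt}(\zeta)$ is the product of its labels and $\eta(\zeta)$ is $\eta$ applied to the $(z,\lambda)$-exponent of $\mathrm{wt}(\zeta)$. The initial graph $\mathrm{in}_\eta\widehat{\Gamma}$ is the subgraph on $W$ of those edges lying in some cycle cover $\zeta$ of $\widehat{\Gamma}$ with $\eta(\zeta)$ minimal among all cycle covers. *)

From HB Require Import structures.
From mathcomp Require Import all_boot all_order all_algebra.
From mathcomp Require Import algC.
From mathcomp Require Import mpoly.
From mathcomp Require Import Rstruct.

Set Implicit Arguments.
Unset Strict Implicit.
Unset Printing Implicit Defensive.

Import Order.TTheory GRing.Theory Num.Theory.
Local Open Scope ring_scope.

(* A Z^d-periodic graph, given by a set W of vertex-orbit representatives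
   (vertex set W x Z^d, vertex (v,b) written b+v) and, for u v : W, the
   finite list adj v u of all alpha in Z^d with v ~ alpha + u.           *)
Record periodic_graph (d : nat) := PeriodicGraph {
  pg_W : finType;
  pg_adj : pg_W -> pg_W -> seq 'rV[int]_d;
  pg_uniq : forall v u, uniq (pg_adj v u);
  (* undirected + Z^d-invariant:  v ~ alpha+u  <->  u ~ (-alpha)+v *)
  pg_sym : forall v u (a : 'rV[int]_d), (a \in pg_adj v u) = (- a \in pg_adj u v);
  pg_noloop : forall v, (0 : 'rV[int]_d) \notin pg_adj v v
}.

Section Defs.
Variables (d : nat) (G : periodic_graph d).
Local Notation W := (pg_W G).
Local Notation adj := (@pg_adj d G).

(* directed edges  v <- u  (v ~ alpha + u) of hat Gamma, other than loops *)
Definition DirE : finType := {p : W * W & 'I_(size (adj p.1 p.2))}.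
Definition dhead (x : DirE) : W := (tag x).1.
Definition dtail (x : DirE) : W := (tag x).2.
Definition dalpha (x : DirE) : 'rV[int]_d :=
  nth 0 (adj (tag x).1 (tag x).2) (tagged x).

Definition isrev (x y : DirE) : bool :=
  [&& dhead y == dtail x, dtail y == dhead x & dalpha y == - dalpha x].

Definition orep (x : DirE) : DirE :=
  if [pick y | isrev x y] is Some y then
    (if (enum_rank y < enum_rank x)%N then y else x)
  else x.

(* indeterminates: one per edge orbit (indexed by its representative) and
   one V(v) per v in W; coefficient ring C[e,V]  (C = algC) *)
Definition Var : finType := (DirE + W)%type.
Definition Coef := {mpoly algC[#|Var|]}.
Definition evar (x : DirE) : Coef := 'X_(enum_rank (inl (orep x) : Var)).
Definition Vvar (v : W) : Coef := 'X_(enum_rank (inr v : Var)).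

Definition ZL := {mpoly Coef[d.+1]}.
Definition zvar (j : 'I_d) : ZL := 'X_(widen_ord (leqnSn d) j).
Definition lam : ZL := 'X_(@ord_max d).

(* shift M >= |alpha_j| for all alpha occurring, so that z^M * H has only
   non-negative exponents *)
Definition shiftM : nat :=
  \max_(x : DirE) \max_(j < d) `|(dalpha x 0 j)%R|%N.

(* z^(beta + M*1), for beta with beta_j + M >= 0 *)
Definition zmon (b : 'rV[int]_d) : ZL :=
  \prod_(j < d) zvar j ^+ `|(b 0 j + (shiftM : int))%R|%N.

(* z^M * (lambda I - H):  (v,u) entry
   z^M (delta_{vu} (lambda - V(v)))  -  sum_{alpha: v ~ alpha+u} e z^(alpha+M) *)
Definition shiftedFloquet : 'M[ZL]_#|W| :=
  \matrix_(i, k)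
    (let v := enum_val i in let u := enum_val k in
     zmon 0 * ((v == u)%:R * (lam - (Vvar v)%:MP))
     - \sum_(x : DirE | (dhead x == v) && (dtail x == u))
          (evar x)%:MP * zmon (dalpha x)).

(* z^(|W| M) * Phi, a genuine polynomial *)
Definition shiftedPhi : ZL := \det shiftedFloquet.

(* exponent vectors (z-exponents, lambda-exponent) of the Laurent polynomial
   Phi = det(lambda I - H) = z^(-|W| M) * shiftedPhi, as points of R^(d+1) *)
Definition Phi_exponents : seq 'rV[Rdefinitions.R]_(d.+1) :=
  [seq \row_(i < d.+1)
        ((m i)%:R - (if (i < d)%N then (#|W| * shiftM)%:R else 0))
   | m : 'X_{1..d.+1} <- msupp shiftedPhi].
End Defs.

Definition in_conv (n : nat) (S : seq 'rV[Rdefinitions.R]_n) (x : 'rV[Rdefinitions.R]_n) : Prop :=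
  exists mu : 'I_(size S) -> Rdefinitions.R,
    (forall i, 0 <= mu i) /\ \sum_i mu i = 1 /\
    x = \sum_i mu i *: S`_i.

Definition newton (d : nat) (G : periodic_graph d) : 'rV[Rdefinitions.R]_(d.+1) -> Prop :=
  in_conv (Phi_exponents G).

Definition dotZR (n : nat) (eta : 'rV[int]_n) (x : 'rV[Rdefinitions.R]_n) : Rdefinitions.R :=
  \sum_i (eta 0 i)%:~R * x 0 i.

Definition exposed_face (n : nat) (P : 'rV[Rdefinitions.R]_n -> Prop) (eta : 'rV[int]_n)
  (x : 'rV[Rdefinitions.R]_n) : Prop :=
  P x /\ forall y, P y -> dotZR eta x <= dotZR eta y.

Definition vertical (d : nat) (F : 'rV[Rdefinitions.R]_(d.+1) -> Prop) : Prop :=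
  exists (x : 'rV[Rdefinitions.R]_(d.+1)) (t : Rdefinitions.R), t != 0 /\
    forall s : Rdefinitions.R, 0 <= s <= 1 -> F (x + (s * t) *: delta_mx 0 ord_max).

Section Hat.
Variables (d : nat) (G : periodic_graph d).
Local Notation W := (pg_W G).

(* edges: inl (inl v) = loop at v labeled lambda,
          inl (inr v) = loop at v labeled -V(v),
          inr x      = edge  v <- u  labeled e z^alpha *)
Definition HatE : finType := ((W + W) + DirE G)%type.
Definition lamloop (v : W) : HatE := inl (inl v).
Definition Vloop (v : W) : HatE := inl (inr v).

Definition hhead (e : HatE) : W :=
  match e with inl (inl v) => v | inl (inr v) => v | inr x => dhead x end.
Definition htail (e : HatE) : W :=
  match e with inl (inl v) => v | inl (inr v) => v | inr x => dtail x end.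

Definition cycle_cover (z : {set HatE}) : Prop :=
  forall v : W,
    #|[set e in z | htail e == v]| = 1%N /\ #|[set e in z | hhead e == v]| = 1%N.

(* (z,lambda)-exponent of wt(z), as an element of Z^(d+1) *)
Definition hexp (e : HatE) : 'rV[int]_(d.+1) :=
  match e with
  | inl (inl v) => delta_mx 0 ord_max
  | inl (inr v) => 0
  | inr x => \row_(i < d.+1)
               (if unlift ord_max i is Some j then dalpha x 0 j else 0)
  end.
Definition wt_exp (z : {set HatE}) : 'rV[int]_(d.+1) := \sum_(e in z) hexp e.

Definition eta_cc (eta : 'rV[int]_(d.+1)) (z : {set HatE}) : int :=
  \sum_i eta 0 i * wt_exp z 0 i.

Definition in_initial (eta : 'rV[int]_(d.+1)) (e : HatE) : Prop :=
  exists z : {set HatE}, [/\ cycle_cover z, e \in z &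
    forall z' : {set HatE}, cycle_cover z' -> eta_cc eta z <= eta_cc eta z'].
End Hat.

(* Expanding Phi = det(lambda I - H) along permutations s, a term picks for each
   vertex an edge of hat Gamma leaving it along s; the sets of edges so chosen are
   exactly the cycle covers, and the (z, lambda)-exponent of the term is that of
   the cover. As e and V are generic nothing cancels: the monomial in e and V
   fixes the undirected edges used, hence the cycles of s and the sign of the
   term. So N(Phi) is the convex hull of the exponents of cycle covers and the
   face exposed by eta is the hull of the eta-minimal ones.
   Trading the lambda loop at v for the -V(v) loop lowers the exponent by the
   vertical unit vector and the eta-value by eta_lambda. If v carries both loops
   in the initial graph, this trade forces eta_lambda = 0 and produces two
   minimal covers whose exponents span a vertical segment. Conversely a vertical
   face forces eta_lambda = 0, and if no minimal cover used a lambda loop, every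
   point of the face would have lambda-coordinate 0; so some minimal cover uses
   the lambda loop at some v, and the trade gives one through the -V(v) loop. *)

From HB Require Import structures.
From mathcomp Require Import all_boot all_order all_algebra all_fingroup.
From mathcomp Require Import algC.
From mathcomp Require Import mpoly.
From mathcomp Require Import Rstruct.
Import Order.TTheory GRing.Theory Num.Theory.
Local Open Scope ring_scope.
Set Implicit Arguments.
Unset Strict Implicit.
Unset Printing Implicit Defensive.

Local Notation R := Rdefinitions.R.

Lemma prod_mpolyX (k : nat) (C : nzRingType) (I : finType) (F : I -> 'X_{1..k}) :
  \prod_i ('X_[F i] : {mpoly C[k]}) = 'X_[\sum_i F i].
Proof. by rewrite (big_morph _ (@mpolyXD _ _) (@mpolyX0 _ _)). Qed.

Lemma mcoeff_sum (k : nat) (C : nzRingType) (I : finType) (P : pred I)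
    (F : I -> {mpoly C[k]}) m :
  (\sum_(i | P i) F i)@_m = \sum_(i | P i) (F i)@_m.
Proof. exact: raddf_sum. Qed.

Lemma mcoeff_signM (k : nat) (C : nzRingType) (b : nat) (p : {mpoly C[k]}) m :
  ((-1) ^+ b * p)@_m = (-1) ^+ b * p@_m.
Proof. by rewrite -(rmorph_sign (@mpolyC k C)) mcoeffCM. Qed.

Section PermOrbits.
Variables (T : finType) (s t : {perm T}).

Lemma porbit_subset_step :
  (forall a, porbit t (s a) = porbit t a) -> forall x, {subset porbit s x <= porbit t x}.
Proof.
move=> step x _ /porbitP[i ->]; rewrite -eq_porbit_mem; apply/eqP.
elim: i => [|i IHi]; first by rewrite expg0 perm1.
by rewrite expgSr permM step.
Qed.

Lemma odd_perm_eq_porbit : porbit s =1 porbit t -> odd_perm s = odd_perm t.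
Proof. by move=> eq_st; rewrite /odd_perm /porbits (eq_imset _ eq_st). Qed.

End PermOrbits.

Lemma sumr_neq0P (V : zmodType) (I : finType) (P : pred I) (F : I -> V) :
  \sum_(i | P i) F i != 0 -> exists2 i, P i & F i != 0.
Proof.
case: (pickP [pred i | P i & F i != 0]) => [i /andP[] | none]; first by exists i.
rewrite big1 ?eqxx // => i Pi; apply/eqP.
by have := none i; rewrite /= Pi => /negbFE.
Qed.

Section ConvexHull.
Variables (k : nat) (eta : 'rV[int]_k).

Lemma dotZR_sum (I : finType) (mu : I -> R) (F : I -> 'rV[R]_k) :
  dotZR eta (\sum_i mu i *: F i) = \sum_i mu i * dotZR eta (F i).
Proof.
rewrite /dotZR; under eq_bigr do rewrite summxE mulr_sumr.
rewrite exchange_big /=; apply: eq_bigr => i _; rewrite mulr_sumr.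
by apply: eq_bigr => j _; rewrite mxE mulrCA.
Qed.

Lemma dotZR_add x y : dotZR eta (x + y) = dotZR eta x + dotZR eta y.
Proof. by rewrite /dotZR -big_split; apply: eq_bigr => j _; rewrite mxE mulrDr. Qed.

Lemma dotZR_scale (a : R) x : dotZR eta (a *: x) = a * dotZR eta x.
Proof. by rewrite /dotZR mulr_sumr; apply: eq_bigr => j _; rewrite mxE mulrCA. Qed.

Lemma dotZR_delta j : dotZR eta (delta_mx 0 j) = (eta 0 j)%:~R.
Proof.
rewrite /dotZR (bigD1 j) //= mxE !eqxx mulr1 big1 ?addr0 // => i /negbTE neq_ij.
by rewrite mxE neq_ij andbF mulr0.
Qed.

Variable S : seq 'rV[R]_k.

Lemma in_conv_mem s : s \in S -> in_conv S s.
Proof.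
rewrite -index_mem => lt_sS; pose i0 := Ordinal lt_sS.
exists (fun i => (i == i0)%:R); split=> [i|]; first exact: ler0n.
split; rewrite (bigD1 i0) //= eqxx ?scale1r big1 ?addr0 ?nth_index -?index_mem //;
  by move=> i /negbTE ->; rewrite ?scale0r.
Qed.

Lemma in_conv_segment x y (t : R) : 0 <= t <= 1 ->
  in_conv S x -> in_conv S y -> in_conv S ((1 - t) *: x + t *: y).
Proof.
move=> /andP[t_ge0 t_le1] [mx [mx_ge0 [mx1 ->]]] [my [my_ge0 [my1 ->]]].
exists (fun i => (1 - t) * mx i + t * my i); split=> [i|].
  by rewrite addr_ge0 ?mulr_ge0 ?subr_ge0.
rewrite big_split /= -!mulr_sumr mx1 my1 !mulr1 subrK; split=> //.
rewrite !scaler_sumr -big_split /=.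
by apply: eq_bigr => i _; rewrite !scalerA -scalerDl.
Qed.

Section LowerBound.
Variable c : R.
Hypothesis S_ge : forall s, s \in S -> c <= dotZR eta s.

Lemma in_conv_dotZR_ge x : in_conv S x -> c <= dotZR eta x.
Proof.
move=> [mu [mu_ge0 [mu1 ->]]]; rewrite dotZR_sum -[c]mul1r -mu1 mulr_suml.
by apply: ler_sum => i _; rewrite ler_wpM2l // S_ge // mem_nth.
Qed.

(* A convex combination reaching the minimum c only uses minimizers. *)
Lemma in_conv_min_coord x j a :
  (forall s, s \in S -> dotZR eta s = c -> s 0 j = a) ->
  in_conv S x -> dotZR eta x = c -> x 0 j = a.
Proof.
move=> min_coord [mu [mu_ge0 [mu1 ->]]].
rewrite dotZR_sum -[c]mul1r -mu1 mulr_suml => /eqP; rewrite -subr_eq0 -sumrB.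
rewrite psumr_eq0 => [/allP mu_min|i _]; last first.
  by rewrite -mulrBr mulr_ge0 ?subr_ge0 ?S_ge ?mem_nth.
rewrite summxE -[a]mul1r -mu1 mulr_suml; apply: eq_bigr => i _; rewrite mxE.
have := mu_min i (mem_index_enum i); rewrite /= -mulrBr mulf_eq0 subr_eq0.
by case/orP=> [/eqP -> | /eqP min_i]; rewrite ?mul0r // min_coord ?mem_nth.
Qed.

Lemma exposed_face_conv x : (exists2 s, s \in S & dotZR eta s = c) ->
  exposed_face (in_conv S) eta x <-> in_conv S x /\ dotZR eta x = c.
Proof.
move=> [s Ss s_min]; split=> [[Sx x_min] | [Sx x_min]].
  split=> //; apply/le_anti; rewrite in_conv_dotZR_ge // andbT -s_min.
  exact/x_min/in_conv_mem.
by split=> // y Sy; rewrite x_min in_conv_dotZR_ge.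
Qed.

End LowerBound.
End ConvexHull.

Lemma vertical_exposed_face_horizontal d (P : 'rV[R]_d.+1 -> Prop) eta :
  vertical (exposed_face P eta) -> eta 0 ord_max = 0.
Proof.
case=> x [t [t_neq0 segment]].
have [Px x_min] : exposed_face P eta (x + (0 * t) *: delta_mx 0 ord_max).
  by apply: segment; rewrite lexx ler01.
have [Py y_min] : exposed_face P eta (x + (1 * t) *: delta_mx 0 ord_max).
  by apply: segment; rewrite lexx ler01.
rewrite mul0r scale0r addr0 in Px x_min; rewrite mul1r in Py y_min.
have : dotZR eta x = dotZR eta (x + t *: delta_mx 0 ord_max).
  by apply/le_anti; rewrite x_min ?y_min.
rewrite dotZR_add dotZR_scale dotZR_delta -{1}[dotZR eta x]addr0 => /addrI/eqP.
by rewrite eq_sym mulf_eq0 (negbTE t_neq0) intr_eq0 => /eqP.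
Qed.

Section FloquetExpansion.
Variables (d : nat) (G : periodic_graph d).
Local Notation W := (pg_W G).
Local Notation n := #|W|.
Local Notation vv := (@enum_val W _).

Definition zmon_mnm (b : 'rV[int]_d) : 'X_{1..d.+1} :=
  [multinom (if unlift ord_max i is Some j
             then `|(b 0%R j + (shiftM G : int))%R|%N else 0%N) | i < d.+1].

Lemma zmonE b : zmon G b = 'X_[zmon_mnm b].
Proof.
rewrite mpolyXE_id big_ord_recr mnmE unlift_none expr0 Monoid.mulm1.
apply: eq_bigr => j _; rewrite mnmE /zvar.
have -> : widen_ord (leqnSn d) j = lift ord_max j by apply: ord_inj; rewrite lift_max.
by rewrite liftK.
Qed.

Definition hat_coef (e : HatE G) : Coef G :=
  match e with inl (inl _) => 1 | inl (inr v) => - Vvar v | inr x => - evar x end.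

Definition hat_mnm (e : HatE G) : 'X_{1..d.+1} :=
  match e with
  | inl (inl _) => (zmon_mnm 0 + U_(ord_max))%MM
  | inl (inr _) => zmon_mnm 0
  | inr x => zmon_mnm (dalpha x)
  end.

(* The label of e, times z^M and with the sign it carries in lambda I - H. *)
Definition hat_term (e : HatE G) : ZL G := (hat_coef e)%:MP * 'X_[hat_mnm e].

Lemma shiftedFloquetE i k : shiftedFloquet G i k =
  \sum_(e : HatE G | (hhead e == vv i) && (htail e == vv k)) hat_term e.
Proof.
rewrite mxE !big_sumType /=.
have -> : \sum_(x : DirE G | (dhead x == vv i) && (dtail x == vv k)) hat_term (inr x)
    = - \sum_(x : DirE G | (dhead x == vv i) && (dtail x == vv k))
          ((evar x)%:MP * zmon G (dalpha x)).
  by rewrite -sumrN; apply: eq_bigr => x _; rewrite /hat_term zmonE rmorphN mulNr.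
congr (_ - _); have [<-|neq_ik] := eqVneq (vv i) (vv k).
  rewrite !(big_pred1 (vv i)) => [|u|u]; rewrite /= ?andbb //.
  rewrite /hat_term /= mpolyXD zmonE /lam rmorphN mpolyC1 !mul1r mulNr mulrBr.
  by congr (_ - _); rewrite mulrC.
by rewrite mul0r mulr0 !big_pred0 ?addr0 // => u;
  apply: contraNF neq_ik => /andP[/eqP<- /eqP<-].
Qed.

Definition perm_edge (s : 'S_n) (i : 'I_n) (e : HatE G) : bool :=
  (hhead e == vv i) && (htail e == vv (s i)).

Lemma shiftedPhiE : shiftedPhi G =
  \sum_(s : 'S_n) (-1) ^+ s * \sum_(f in family (perm_edge s)) \prod_i hat_term (f i).
Proof.
apply: eq_bigr => s _; congr (_ * _).
rewrite -(bigA_distr_big_dep _ (fun _ e => hat_term e)).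
by apply: eq_bigr => i _; exact: shiftedFloquetE.
Qed.

Definition hat_sign (e : HatE G) : nat := if e is inl (inl _) then 0%N else 1%N.

Definition hat_var (e : HatE G) : 'X_{1..#|Var G|} :=
  match e with
  | inl (inl _) => 0%MM
  | inl (inr v) => U_(enum_rank (inr v : Var G))%MM
  | inr x => U_(enum_rank (inl (orep x) : Var G))%MM
  end.

Lemma hat_coefE e : hat_coef e = (-1) ^+ hat_sign e * 'X_[hat_var e].
Proof. by case: e => [[v|v]|x]; rewrite /= ?mpolyX0 ?expr0 ?mul1r ?mulN1r. Qed.

Definition fam_sign (f : {ffun 'I_n -> HatE G}) : nat := \sum_i hat_sign (f i).
Definition fam_var (f : {ffun 'I_n -> HatE G}) := (\sum_i hat_var (f i))%MM.
Definition fam_mnm (f : {ffun 'I_n -> HatE G}) := (\sum_i hat_mnm (f i))%MM.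

Lemma prod_hat_term (f : {ffun 'I_n -> HatE G}) : \prod_i hat_term (f i) =
  ((-1) ^+ fam_sign f * 'X_[fam_var f])%:MP * 'X_[fam_mnm f].
Proof.
rewrite big_split /= prod_mpolyX -rmorph_prod.
by under eq_bigr do rewrite hat_coefE; rewrite big_split /= prod_mpolyX prodrXr.
Qed.

Lemma mcoeff_shiftedPhi m k : ((shiftedPhi G)@_m)@_k =
  \sum_(s : 'S_n) \sum_(f in family (perm_edge s))
     (-1) ^+ (s + fam_sign f) * ((fam_var f == k) && (fam_mnm f == m))%:R.
Proof.
rewrite shiftedPhiE !mcoeff_sum; apply: eq_bigr => s _.
rewrite mcoeff_signM mcoeff_sum mcoeff_signM mcoeff_sum mulr_sumr.
apply: eq_bigr => f _; rewrite prod_hat_term mcoeffCM mcoeffX.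
case: (_ == m); last by rewrite andbF !mulr0 mcoeff0 mulr0.
by rewrite mulr1 mcoeff_signM mcoeffX andbT exprD mulrA.
Qed.

End FloquetExpansion.

Lemma fiber1_inj (T U : finType) (A : {set T}) (h : T -> U) :
  (forall u, #|[set x in A | h x == u]| = 1%N) -> {in A &, injective h}.
Proof.
move=> fiber1 x y Ax Ay eq_h; have /eqP/cards1P[w Aw] := fiber1 (h x).
have : x \in [set w] by rewrite -Aw inE Ax eqxx.
have : y \in [set w] by rewrite -Aw inE Ay eq_h eqxx.
by rewrite !inE => /eqP -> /eqP ->.
Qed.

Section CycleCovers.
Variables (d : nat) (G : periodic_graph d).
Local Notation W := (pg_W G).
Local Notation n := #|W|.
Local Notation vv := (@enum_val W _).
Local Notation HatE := (HatE G).
Local Notation perm_edge := (@perm_edge d G).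

Lemma perm_edgeP (s : 'S_n) (f : {ffun 'I_n -> HatE}) :
  f \in family (perm_edge s) ->
  forall i, hhead (f i) = vv i /\ htail (f i) = vv (s i).
Proof. by move=> /familyP fam_f i; have /andP[/eqP -> /eqP ->] := fam_f i. Qed.

Lemma perm_edge_inj s f : f \in family (perm_edge s) -> injective f.
Proof.
move=> /perm_edgeP ends i j eq_f.
by apply: enum_val_inj; rewrite -(ends i).1 eq_f (ends j).1.
Qed.

Lemma imset_fiber (f : 'I_n -> HatE) (h : HatE -> W) (p : 'S_n) v :
  (forall i, h (f i) = vv (p i)) ->
  [set e in [set f i | i : 'I_n] | h e == v] = [set f ((p^-1)%g (enum_rank v))].
Proof.
move=> hf; apply/setP => e; rewrite !inE; apply/andP/eqP => [[/imsetP[i _ ->]]|->].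
  by rewrite hf => /eqP <-; rewrite enum_valK permK.
by split; [exact: imset_f | rewrite hf permKV enum_rankK].
Qed.

Lemma perm_edge_cover s f :
  f \in family (perm_edge s) -> cycle_cover [set f i | i : 'I_n].
Proof.
move=> /perm_edgeP ends v; split.
  by rewrite (@imset_fiber _ _ s) ?cards1 // => i; rewrite (ends i).2.
by rewrite (@imset_fiber _ _ 1) ?cards1 // => i; rewrite (ends i).1 perm1.
Qed.

Section CoverFamily.
Variables (z : {set HatE}) (z_cover : cycle_cover z).

Lemma cover_head_inj : {in z &, injective (@hhead d G)}.
Proof. exact: fiber1_inj (fun v => (z_cover v).2). Qed.

Lemma cover_tail_inj : {in z &, injective (@htail d G)}.
Proof. exact: fiber1_inj (fun v => (z_cover v).1). Qed.

Definition cover_fun : {ffun 'I_n -> HatE} :=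
  [ffun i => odflt (lamloop (vv i)) [pick e in z | hhead e == vv i]].

Lemma cover_funP i : cover_fun i \in z /\ hhead (cover_fun i) = vv i.
Proof.
rewrite ffunE; case: pickP => [e /andP[ze /eqP] //|no_e].
have /eqP/cards1P[x zx] := (z_cover (vv i)).2.
by have := no_e x; have := set11 x; rewrite -zx inE => ->.
Qed.

Lemma cover_fun_tail_inj : injective (fun i => enum_rank (htail (cover_fun i))).
Proof.
move=> i j /enum_rank_inj /(cover_tail_inj (cover_funP i).1 (cover_funP j).1) eq_f.
by apply: enum_val_inj; rewrite -(cover_funP i).2 eq_f (cover_funP j).2.
Qed.

Definition cover_perm : 'S_n := perm cover_fun_tail_inj.

Lemma cover_fun_family : cover_fun \in family (perm_edge cover_perm).
Proof.
by apply/familyP => i; rewrite unfold_in (cover_funP i).2 permE enum_rankK !eqxx.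
Qed.

Lemma cover_funE : z = [set cover_fun i | i : 'I_n].
Proof.
apply/setP => e; apply/idP/imsetP => [ze|[i _ ->]]; last exact: (cover_funP i).1.
exists (enum_rank (hhead e)) => //; apply: cover_head_inj => //.
  exact: (cover_funP _).1.
by rewrite (cover_funP _).2 enum_rankK.
Qed.

End CoverFamily.
End CycleCovers.

Section SignRigidity.
Variables (d : nat) (G : periodic_graph d).
Local Notation n := #|pg_W G|.
Local Notation perm_edge := (@perm_edge d G).

Lemma orepP (x : DirE G) : orep x = x \/ isrev x (orep x).
Proof.
rewrite /orep; case: pickP => [y rev_xy|_]; last by left.
by case: ifP => _; [right | left].
Qed.

Lemma orep_ends (x y : DirE G) : orep x = orep y ->
  (dhead x = dhead y /\ dtail x = dtail y) \/ (dhead x = dtail y /\ dtail x = dhead y).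
Proof.
have [rx|/and3P[/eqP hx /eqP tx _]] := orepP x;
have [ry|/and3P[/eqP hy /eqP ty _]] := orepP y => eq_xy.
- by left; rewrite -rx -ry eq_xy.
- by right; rewrite -hy -ty -eq_xy rx.
- by right; rewrite -hx -tx eq_xy ry.
- by left; rewrite -tx -hy -hx -ty eq_xy.
Qed.

Lemma hat_var_orep_gt0 e (x : DirE G) :
  (0 < hat_var e (enum_rank (inl (orep x) : Var G)))%N ->
  exists2 y, e = inr y & orep y = orep x.
Proof.
case: e => [[v|v]|y] /=; rewrite ?mnm0E ?mnm1E ?lt0b ?(inj_eq enum_rank_inj) //.
by move=> /eqP[<-]; exists y.
Qed.

Section SameVariables.
Variables (s s' : 'S_n) (f f' : {ffun 'I_n -> HatE G}).
Hypotheses (fam_f : f \in family (perm_edge s)) (fam_f' : f' \in family (perm_edge s')).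
Hypothesis eq_var : fam_var f = fam_var f'.

(* The edge orbit of f a, read off from its variable e, is also used by f', in
   one of its two orientations; either way a and s a share an s'-cycle. *)
Lemma perm_edge_porbit_step a : porbit s' (s a) = porbit s' a.
Proof.
have porbit_step b : porbit s' (s' b) = porbit s' b.
  by have := porbit_perm s' 1 b; rewrite expg1.
have [hf tf] := perm_edgeP fam_f a.
case fa: (f a) hf tf => [[v|v]|x] /= hf tf.
- by congr porbit; apply: enum_val_inj; rewrite -tf -hf.
- by congr porbit; apply: enum_val_inj; rewrite -tf -hf.
set r := enum_rank (inl (orep x) : Var G).
have : (0 < fam_var f' r)%N.
  by rewrite -eq_var /fam_var mnm_sumE (bigD1 a) //= fa /= mnm1E eqxx.
rewrite /fam_var mnm_sumE lt0n sum_nat_eq0 => /forallPn[a' /=].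
rewrite -lt0n => /hat_var_orep_gt0[y f'a' ry].
have [hf' tf'] := perm_edgeP fam_f' a'; rewrite f'a' /= in hf' tf'.
case: (orep_ends ry) => [[h t]|[h t]].
  have eq_a' : a' = a by apply: enum_val_inj; rewrite -hf' h hf.
  have -> : s a = s' a by apply: enum_val_inj; rewrite -tf -t tf' eq_a'.
  exact: porbit_step.
have eq_a' : a' = s a by apply: enum_val_inj; rewrite -hf' h tf.
have eq_s'a' : s' a' = a by apply: enum_val_inj; rewrite -tf' t hf.
by rewrite -eq_a' -porbit_step eq_s'a'.
Qed.

End SameVariables.
End SignRigidity.

Section Support.
Variables (d : nat) (G : periodic_graph d).
Local Notation n := #|pg_W G|.
Local Notation perm_edge := (@perm_edge d G).

Lemma perm_edge_odd_perm s s' f f' :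
  f \in family (perm_edge s) -> f' \in family (perm_edge s') ->
  fam_var f = fam_var f' -> odd_perm s = odd_perm s'.
Proof.
move=> fam_f fam_f' eq_var; apply: odd_perm_eq_porbit => x.
apply/porbit_setP => y; apply/idP/idP; apply: porbit_subset_step.
  exact: perm_edge_porbit_step fam_f fam_f' eq_var.
exact: perm_edge_porbit_step fam_f' fam_f (esym eq_var).
Qed.

Lemma fam_sign_mdeg (f : {ffun 'I_n -> HatE G}) : fam_sign f = mdeg (fam_var f).
Proof.
rewrite /fam_sign /fam_var mdeg_sum; apply: eq_bigr => i _.
by case: (f i) => [[v|v]|x]; rewrite /= ?mdeg0 ?mdeg1.
Qed.

Lemma msupp_shiftedPhi_family m : m \in msupp (shiftedPhi G) ->
  exists s f, f \in family (perm_edge s) /\ fam_mnm f = m.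
Proof.
rewrite mcoeff_msupp => Phi_m.
have [k supp_k] : exists k, k \in msupp (shiftedPhi G)@_m.
  case supp_m: (msupp _) => [|k ks]; last by exists k; rewrite mem_head.
  by move: Phi_m; rewrite -msupp_eq0 supp_m.
move: supp_k; rewrite mcoeff_msupp mcoeff_shiftedPhi.
move=> /sumr_neq0P[s _ /sumr_neq0P[f fam_f]].
by case: (fam_mnm f =P m) => [eq_m _|_]; [exists s, f | rewrite andbF mulr0 eqxx].
Qed.

(* No cancellation: all (s, f) contributing to the coefficient of e^k z^m carry
   the same sign, since k determines both the parity of s and the number of
   non-lambda edges. *)
Lemma family_msupp_shiftedPhi s0 f0 :
  f0 \in family (perm_edge s0) -> fam_mnm f0 \in msupp (shiftedPhi G).
Proof.
move=> fam_f0; set m := fam_mnm f0; set k := fam_var f0.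
pose same (f : {ffun 'I_n -> HatE G}) := (fam_var f == k) && (fam_mnm f == m).
have coefE : ((shiftedPhi G)@_m)@_k = (-1) ^+ (s0 + fam_sign f0)
    * (\sum_(s : 'S_n) \sum_(f in family (perm_edge s)) same f)%:R.
  rewrite mcoeff_shiftedPhi natr_sum mulr_sumr; apply: eq_bigr => s _.
  rewrite natr_sum mulr_sumr; apply: eq_bigr => f fam_f.
  rewrite /same; case: (fam_var f =P k) => [eq_k|]; last by rewrite !mulr0.
  by rewrite (perm_edge_odd_perm fam_f fam_f0 eq_k) !fam_sign_mdeg eq_k.
rewrite mcoeff_msupp; apply/eqP => Phi_m0; move: coefE.
rewrite Phi_m0 mcoeff0 => /esym/eqP; rewrite mulf_eq0 signr_eq0 pnatr_eq0.
by rewrite (bigD1 s0) //= (bigD1 f0) //= /same !eqxx.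
Qed.

End Support.

Section Exponents.
Variables (d : nat) (G : periodic_graph d).
Local Notation n := #|pg_W G|.
Local Notation M := (shiftM G).
Local Notation perm_edge := (@perm_edge d G).

Definition z_shift (i : 'I_d.+1) : int := if (i < d)%N then M%:Z else 0.

Lemma absz_dalpha_shift (x : DirE G) j :
  `|(dalpha x 0%R j + M%:Z)%R|%N = dalpha x 0%R j + M%:Z :> int.
Proof.
have : (`|dalpha x 0%R j|%N <= M)%N by apply: bigop.bigmax_sup (bigop.bigmax_sup _ _ _).
rewrite -lez_nat abszE => /ler_normlP[le_Ma _].
by rewrite abszE ger0_norm // -lerBlDr sub0r lerNl.
Qed.

Lemma hat_mnm_coord (e : HatE G) i : (hat_mnm e i)%:Z = z_shift i + hexp e 0 i.
Proof.
rewrite /z_shift; case: (unliftP ord_max i) => [j ->|->].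
  rewrite lift_max ltn_ord.
  case: e => [[v|v]|x] /=; rewrite ?mnmDE /zmon_mnm mnmE ?mnm1E liftK ?mxE ?liftK.
  - by rewrite (negbTE (neq_lift _ _)) eq_sym (negbTE (neq_lift _ _)) !addr0 addn0.
  - by rewrite add0r addr0.
  - by rewrite absz_dalpha_shift addrC.
rewrite ltnn; case: e => [[v|v]|x] /=;
  by rewrite ?mnmDE /zmon_mnm mnmE ?mnm1E ?mxE ?unlift_none ?eqxx.
Qed.

Definition cover_pt (z : {set HatE G}) : 'rV[R]_d.+1 := \row_i (wt_exp z 0 i)%:~R.

Lemma fam_mnm_exponent s (f : {ffun 'I_n -> HatE G}) :
  f \in family (perm_edge s) ->
  \row_i ((fam_mnm f i)%:R - (if (i < d)%N then (n * M)%:R else 0)) =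
  cover_pt [set f j | j : 'I_n].
Proof.
move=> fam_f; apply/rowP => i; rewrite !mxE /wt_exp summxE big_imset /=; last first.
  by move=> a b _ _; apply: (perm_edge_inj fam_f).
have -> : (fam_mnm f i)%:R = (z_shift i *+ n + \sum_j hexp (f j) 0 i)%:~R :> R.
  rewrite pmulrn /fam_mnm mnm_sumE (big_morph Posz PoszD (erefl _)).
  by under eq_bigr do rewrite hat_mnm_coord; rewrite big_split sumr_const card_ord.
rewrite intrD; suff -> : (z_shift i *+ n)%:~R = (if (i < d)%N then (n * M)%:R else 0 : R).
  by rewrite addrAC subrr add0r.
rewrite /z_shift; case: ifP => _; last by rewrite mul0rn.
by rewrite rmorphMn /= mulnC natrM mulr_natr.
Qed.

Lemma Phi_exponentsP p :
  p \in Phi_exponents G <-> exists2 z, cycle_cover z & p = cover_pt z.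
Proof.
split => [/mapP[m /msupp_shiftedPhi_family[s [f [fam_f <-]]] ->]|[z z_cover ->]].
  exists [set f j | j : 'I_n]; first exact: perm_edge_cover fam_f.
  exact: fam_mnm_exponent fam_f.
apply/mapP; exists (fam_mnm (cover_fun z)).
  exact: family_msupp_shiftedPhi (cover_fun_family z_cover).
by rewrite (fam_mnm_exponent (cover_fun_family z_cover)) -cover_funE.
Qed.
End Exponents.

Section LoopSwap.
Variables (d : nat) (G : periodic_graph d).
Local Notation W := (pg_W G).
Local Notation HatE := (HatE G).
Local Notation delta := (delta_mx 0 ord_max).

Lemma cycle_cover_perm (p : {perm HatE}) z :
  (forall e, hhead (p e) = hhead e) -> (forall e, htail (p e) = htail e) ->
  cycle_cover z -> cycle_cover (p @: z).
Proof.
move=> p_head p_tail z_cover v.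
have fiber (h : HatE -> W) : (forall e, h (p e) = h e) ->
    [set e in p @: z | h e == v] = p @: [set e in z | h e == v].
  move=> p_h; apply/setP => e; rewrite inE.
  apply/andP/imsetP => [[/imsetP[e' ze' ->]] | [e' ]].
    by rewrite p_h => h_e'; exists e'; rewrite // inE ze'.
  by rewrite inE => /andP[ze' h_e'] ->; rewrite imset_f // p_h.
by rewrite !fiber // !card_imset; [exact: z_cover | exact: perm_inj..].
Qed.

Definition loop_swap (v : W) (z : {set HatE}) : {set HatE} :=
  tperm (lamloop v) (Vloop v) @: z.

Lemma loop_swapK v : involutive (loop_swap v).
Proof.
by move=> z; rewrite /loop_swap -imset_comp (eq_imset _ (tpermK _ _)) imset_id.
Qed.

Lemma cycle_cover_loop_swap v (z : {set HatE}) :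
  cycle_cover z -> cycle_cover (loop_swap v z).
Proof. by apply: cycle_cover_perm => e; case: tpermP => [->|->|]. Qed.

Lemma Vloop_loop_swap v (z : {set HatE}) :
  lamloop v \in z -> Vloop v \in loop_swap v z.
Proof. by move=> zl; rewrite -(tpermL (lamloop v) (Vloop v)) imset_f. Qed.

Lemma lamloop_loop_swap v (z : {set HatE}) :
  Vloop v \in z -> lamloop v \in loop_swap v z.
Proof. by move=> zV; rewrite -(tpermR (lamloop v) (Vloop v)) imset_f. Qed.

Lemma wt_exp_loop_swap v (z : {set HatE}) : cycle_cover z -> lamloop v \in z ->
  wt_exp z = wt_exp (loop_swap v z) + delta.
Proof.
move=> z_cover zl; have zV : Vloop v \notin z.
  by apply/negP => zV; have := cover_head_inj z_cover zl zV erefl.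
rewrite /wt_exp /loop_swap big_imset; last exact: in2W perm_inj.
rewrite (bigD1 (lamloop v)) //= [in RHS](bigD1 (lamloop v)) //= tpermL /= add0r addrC.
congr (_ + _); apply: eq_bigr => e /andP[ze neq_el].
by rewrite tpermD 1?eq_sym //; apply: contraNneq zV => <-.
Qed.

Lemma cover_pt_loop_swap v (z : {set HatE}) : cycle_cover z -> lamloop v \in z ->
  cover_pt z = cover_pt (loop_swap v z) + delta.
Proof.
move=> z_cover zl; apply/rowP => i.
by rewrite !mxE (wt_exp_loop_swap z_cover zl) !mxE intrD; case: (_ && _).
Qed.

Lemma dotZR_cover_pt eta (z : {set HatE}) :
  dotZR eta (cover_pt z) = (eta_cc eta z)%:~R.
Proof.
by rewrite /dotZR /eta_cc rmorph_sum; apply: eq_bigr => i _; rewrite mxE rmorphM.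
Qed.

Lemma eta_cc_loop_swap eta v (z : {set HatE}) : cycle_cover z -> lamloop v \in z ->
  eta_cc eta z = eta_cc eta (loop_swap v z) + eta 0 ord_max.
Proof.
move=> z_cover zl; apply: (@intr_inj R).
by rewrite intrD -!dotZR_cover_pt (cover_pt_loop_swap z_cover zl) dotZR_add dotZR_delta.
Qed.

End LoopSwap.

Section InitialGraph.
Variables (d : nat) (G : periodic_graph d) (eta : 'rV[int]_d.+1).
Local Notation W := (pg_W G).
Local Notation HatE := (HatE G).

Definition cycle_coverb (z : {set HatE}) : bool :=
  [forall v, (#|[set e in z | htail e == v]| == 1%N)
          && (#|[set e in z | hhead e == v]| == 1%N)].

Lemma cycle_coverP (z : {set HatE}) : reflect (cycle_cover z) (cycle_coverb z).
Proof.
apply: (iffP forallP) => [cover_z v | cover_z v].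
  by have /andP[/eqP -> /eqP ->] := cover_z v.
by have [-> ->] := cover_z v.
Qed.

Lemma exists_min_cover : exists2 z : {set HatE}, cycle_cover z &
  forall z' : {set HatE}, cycle_cover z' -> eta_cc eta z <= eta_cc eta z'.
Proof.
pose z0 := [set [ffun i => lamloop (enum_val i)] i | i : 'I_#|W|].
have cover_z0 : cycle_cover z0.
  apply: (@perm_edge_cover _ _ 1); apply/familyP => i.
  by rewrite unfold_in ffunE perm1 !eqxx.
have [z /cycle_coverP z_cover z_min] :=
  arg_minP (eta_cc eta) (introT (cycle_coverP z0) cover_z0).
by exists z => // z' /cycle_coverP /z_min.
Qed.

Lemma lamloop_of_wt_exp (z : {set HatE}) :
  wt_exp z 0 ord_max != 0 -> exists v, lamloop v \in z.
Proof.
case: (pickP (fun v => lamloop v \in z)) => [v zl _|no_lam]; first by exists v.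
rewrite /wt_exp summxE big1 ?eqxx // => -[[v|v]|x] ze /=; rewrite mxE //.
  by rewrite no_lam in ze.
by rewrite unlift_none.
Qed.

Section MinimalCover.
Variable z0 : {set HatE}.
Hypotheses (z0_cover : cycle_cover z0)
  (z0_min : forall z : {set HatE}, cycle_cover z -> eta_cc eta z0 <= eta_cc eta z).

Lemma Phi_exponents_ge s :
  s \in Phi_exponents G -> (eta_cc eta z0)%:~R <= dotZR eta s.
Proof.
by case/Phi_exponentsP => z z_cover ->; rewrite dotZR_cover_pt ler_int z0_min.
Qed.

Lemma exposed_face_newtonE x : exposed_face (newton G) eta x <->
  newton G x /\ dotZR eta x = (eta_cc eta z0)%:~R.
Proof.
apply: (exposed_face_conv Phi_exponents_ge).
by exists (cover_pt z0); [apply/Phi_exponentsP; exists z0 | rewrite dotZR_cover_pt].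
Qed.

End MinimalCover.

Lemma vertical_in_initial_lamloop :
  vertical (exposed_face (newton G) eta) -> exists v : W, in_initial eta (lamloop v).
Proof.
move=> [x [t [t_neq0 segment]]]; have [z0 z0_cover z0_min] := exists_min_cover.
pose lam_min z := [&& cycle_coverb z, eta_cc eta z == eta_cc eta z0
                    & wt_exp z 0 ord_max != 0].
case: (pickP lam_min) => [z /and3P[/cycle_coverP z_cover /eqP z_eq] | no_lam_min].
  by case/lamloop_of_wt_exp => v zl; exists v, z; split=> // z' /z0_min; rewrite z_eq.
have face_coord s : s \in Phi_exponents G ->
    dotZR eta s = (eta_cc eta z0)%:~R -> s 0 ord_max = 0.
  case/Phi_exponentsP => z z_cover ->; rewrite dotZR_cover_pt mxE => /intr_inj z_eq.
  apply/eqP; rewrite intr_eq0; apply: contraFT (no_lam_min z) => wt_z.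
  by rewrite /lam_min z_eq eqxx wt_z (introT (cycle_coverP z) z_cover).
have coord0 s : 0 <= s <= 1 -> (x + (s * t) *: delta_mx 0 ord_max) 0 ord_max = 0.
  move=> /segment /(exposed_face_newtonE z0_cover z0_min)[newton_xs min_xs].
  exact: (in_conv_min_coord (Phi_exponents_ge z0_min) face_coord newton_xs min_xs).
have := coord0 0; rewrite lexx ler01 mul0r scale0r addr0 => /(_ isT) x0.
have := coord0 1; rewrite lexx ler01 mul1r !mxE x0 !eqxx add0r mulr1 => /(_ isT) t0.
by rewrite t0 eqxx in t_neq0.
Qed.

Lemma in_initial_Vloop (v : W) : eta 0 ord_max = 0 ->
  in_initial eta (lamloop v) -> in_initial eta (Vloop v).
Proof.
move=> eta0 [z [z_cover zl z_min]]; exists (loop_swap v z); split.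
- exact: cycle_cover_loop_swap.
- exact: Vloop_loop_swap.
- by move=> z' /z_min; rewrite (eta_cc_loop_swap eta z_cover zl) eta0 addr0.
Qed.

Lemma in_initial_loops_horizontal (v : W) :
  in_initial eta (lamloop v) -> in_initial eta (Vloop v) -> eta 0 ord_max = 0.
Proof.
move=> [z1 [z1_cover z1l z1_min]] [z2 [z2_cover z2V z2_min]].
have z2'_cover := cycle_cover_loop_swap v z2_cover.
apply/le_anti/andP; split.
  have := z1_min _ (cycle_cover_loop_swap v z1_cover).
  by rewrite (eta_cc_loop_swap eta z1_cover z1l) gerDl.
have := z2_min _ z2'_cover; rewrite -{1}(loop_swapK v z2).
by rewrite (eta_cc_loop_swap eta z2'_cover (lamloop_loop_swap z2V)) lerDl.
Qed.

Lemma in_initial_lamloop_vertical (v : W) : eta 0 ord_max = 0 ->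
  in_initial eta (lamloop v) -> vertical (exposed_face (newton G) eta).
Proof.
move=> eta0 [z [z_cover zl z_min]]; set z' := loop_swap v z.
have z'_cover : cycle_cover z' := cycle_cover_loop_swap v z_cover.
have newton_pt (y : {set HatE}) : cycle_cover y -> newton G (cover_pt y).
  by move=> y_cover; apply/in_conv_mem/Phi_exponentsP; exists y.
exists (cover_pt z'), 1; split=> [|s s01]; first exact: oner_neq0.
apply/(exposed_face_newtonE z_cover z_min); split.
  have -> : cover_pt z' + (s * 1) *: delta_mx 0 ord_max
          = (1 - s) *: cover_pt z' + s *: cover_pt z.
    rewrite (cover_pt_loop_swap z_cover zl) scalerDr addrA -scalerDl subrK.
    by rewrite scale1r mulr1.
  exact: in_conv_segment s01 (newton_pt _ z'_cover) (newton_pt _ z_cover).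
rewrite dotZR_add dotZR_scale dotZR_delta eta0 mulr0 addr0 dotZR_cover_pt.
by rewrite (eta_cc_loop_swap eta z_cover zl) eta0 addr0.
Qed.

End InitialGraph.

Unset Implicit Arguments.

Theorem theorem2p16 (d : nat) (G : periodic_graph d) (eta : 'rV[int]_(d.+1)) :
  (vertical (exposed_face (newton G) eta) <->
     exists v : pg_W G, in_initial eta (lamloop v) /\ in_initial eta (Vloop v))
  /\ (vertical (exposed_face (newton G) eta) -> eta 0 ord_max = 0).
Proof.
split; last exact: vertical_exposed_face_horizontal.
split=> [vert | [v [lam_v V_v]]].
  have [v lam_v] := vertical_in_initial_lamloop vert.
  exists v; split=> //.
  exact: in_initial_Vloop (vertical_exposed_face_horizontal vert) lam_v.
exact: in_initial_lamloop_vertical (in_initial_loops_horizontal lam_v V_v) lam_v.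
Qed.
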